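(* Let $u:[0,\infty)\to\mathbb{R}\cup\{-\infty\}$ be twice continuously differentiable on $(0,\infty)$ with $u'>0$, $u''<0$ on $(0,\infty)$ and $\lim_{x\downarrow 0}u'(x)=\infty$, and let $(\beta,R,Y)$ be a random vector with strictly positive components and finite support. For $w>0$ let $c(w)$ be the unique solution of $\max_c u(c)+\mathbb{E}[\beta u(R(w-c)+Y)]$ subject to $c>0$ and $R(w-c)+Y\ge 0$ in every state, let $s(w)=w-c(w)$, and let $S=s((0,\infty))$ (an open interval). Define $g:S\to(0,\infty)$ by $$g(s)=(u')^{-1}\big(\mathbb{E}[\beta R\,u'(Rs+Y)]\big).$$ If the consumption function $c$ is concave on $(0,\infty)$, then $g$ is concave on $S$.
   Context: It is known (and may be used) that $c$ and $s$ are continuously differentiable with $c',s'\in(0,1)$, that the Euler equation $u'(c(w))=\mathbb{E}[\beta R u'(Rs(w)+Y)]$ holds, so $g(s(w))=c(w)$ for all $w>0$, and that $g$ is strictly increasing. *)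

From HB Require Import structures.
From mathcomp Require Import all_boot all_order all_algebra.
From mathcomp Require Import all_classical all_reals all_analysis.
Set Implicit Arguments. Unset Strict Implicit. Unset Printing Implicit Defensive.
Import Order.TTheory GRing.Theory Num.Theory.
Import numFieldNormedType.Exports.
Local Open Scope classical_set_scope.
Local Open Scope ring_scope.

Section Defs.
Variables (R : realType) (n : nat).

(* real part of the utility u : R -> \bar R on (0,oo) *)
Definition ureal (u : R -> \bar R) (x : R) : R := fine (u x).

Definition feasible (Ret Y : 'I_n -> R) (w c : R) : Prop :=
  0 < c /\ forall i, 0 <= Ret i * (w - c) + Y i.

(* objective u(c) + E[beta u(R(w-c)+Y)], with probabilities p *)
Definition objective (u : R -> \bar R) (p beta Ret Y : 'I_n -> R) (w c : R)
  : \bar R :=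
  (u c + \sum_(i < n) ((p i * beta i)%:E * u (Ret i * (w - c) + Y i)%R))%E.

Definition is_consumption_function (u : R -> \bar R) (p beta Ret Y : 'I_n -> R)
  (c : R -> R) : Prop :=
  forall w, 0 < w ->
    feasible Ret Y w (c w) /\
    forall c', feasible Ret Y w c' -> c' <> c w ->
      (objective u p beta Ret Y w c' < objective u p beta Ret Y w (c w))%E.

Definition pos_inverse (f : R -> R) (y : R) : R :=
  xget 0 [set x | 0 < x /\ f x = y].

Definition gfun (u : R -> \bar R) (p beta Ret Y : 'I_n -> R) (s : R) : R :=
  pos_inverse (derive1 (ureal u))
    (\sum_(i < n) p i * (beta i * Ret i * derive1 (ureal u) (Ret i * s + Y i))).

Definition concave_on (D : set R) (f : R -> R) : Prop :=
  forall x y t, D x -> D y -> 0 <= t <= 1 ->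
    t * f x + (1 - t) * f y <= f (t * x + (1 - t) * y).

End Defs.

(* At a wealth w where every state keeps positive resources, the first-order
   condition of the consumption problem is the Euler equation
   u'(c w) = V (s w), with V z = E[beta R u'(R z + Y)] and s w = w - c w; hence
   g (s w) = c w.  As u' and V are decreasing, g z >= c w whenever z >= s w.
   Since c is concave, s is convex, so for w_t = t w1 + (1 - t) w2 the point
   z = t s(w1) + (1 - t) s(w2) satisfies z >= s(w_t), and
   g z >= c w_t >= t c w1 + (1 - t) c w2 = t g (s w1) + (1 - t) g (s w2).

   It remains to exclude states with zero resources.  A concave c is
   continuous, so if state j has zero resources at w0 but positive ones at w1,
   R_j s + Y_j takes arbitrarily small positive values between them, where the
   Euler equation bounds u'(R_j s + Y_j) by a multiple of u'(c) with c bounded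
   below, contradicting u' -> +oo at 0.  If no wealth level is interior, s is
   constant and there is nothing to prove. *)

From HB Require Import structures.
From mathcomp Require Import all_boot all_order all_algebra.
From mathcomp Require Import all_classical all_reals all_analysis.
From mathcomp Require Import ring lra.
Import Order.TTheory GRing.Theory Num.Theory.
Import numFieldNormedType.Exports.
Local Open Scope classical_set_scope.
Local Open Scope ring_scope.
Set Implicit Arguments. Unset Strict Implicit. Unset Printing Implicit Defensive.

Section concave_real.
Variables (R : realType) (D : set R) (f : R -> R).
Hypothesis f_concave : concave_on D f.

Lemma concave_chord a b x : D a -> D b -> a <= x <= b ->
  (b - x) * f a + (x - a) * f b <= (b - a) * f x.
Proof.
move=> Da Db /andP[ax xb]; have [ab|ba] := ltP a b; last first.
  have [-> ->] : x = a /\ b = a by split; lra.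
  by rewrite subrr !mul0r addr0.
have ba0 : b - a != 0 by rewrite subr_eq0 gt_eqF.
pose t := (b - x) / (b - a).
have t01 : 0 <= t <= 1.
  by rewrite divr_ge0 ?ler_pdivrMr ?subr_ge0 ?subr_gt0 //=; lra.
have xE : t * a + (1 - t) * b = x by rewrite /t; field.
have -> : (b - x) * f a + (x - a) * f b = (b - a) * (t * f a + (1 - t) * f b).
  by rewrite /t; field.
by rewrite ler_pM2l ?subr_gt0 // -xE; apply: f_concave.
Qed.

Lemma concave_ge_min a b x : D a -> D b -> x \in `[Num.min a b, Num.max a b] ->
  Num.min (f a) (f b) <= f x.
Proof.
wlog ab : a b / a <= b => [wlog_ab|].
  have [ab|/ltW ab] := leP a b.
    by move: (wlog_ab a b ab); rewrite (min_idPl ab) (max_idPr ab).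
  move: (wlog_ab b a ab); rewrite (min_idPl ab) (max_idPr ab) minC.
  by move=> H Da Db; apply: H.
rewrite (min_idPl ab) (max_idPr ab) in_itv /= => Da Db xab.
set m := Num.min (f a) (f b).
have ma : m <= f a by rewrite ge_min lexx.
have mb : m <= f b by rewrite ge_min lexx orbT.
have := concave_chord Da Db xab; have [{}ab|ba] := ltP a b; last first.
  by have -> : x = a by lra.
move: xab => /andP[ax xb] chord.
have : (b - a) * m <= (b - a) * f x by nra.
by rewrite ler_pM2l // subr_gt0.
Qed.

Lemma concave_increment_right x1 x x2 y : D x1 -> D x -> D y -> D x2 ->
  x1 < x -> x <= y <= x2 -> x < x2 ->
  (y - x) * ((f x2 - f x) / (x2 - x)) <= f y - f x <= (y - x) * ((f x - f x1) / (x - x1)).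
Proof.
move=> Dx1 Dx Dy Dx2 x1x /andP[xy yx2] xx2; apply/andP; split.
  rewrite -(ler_pM2l (_ : 0 < x2 - x)) ?subr_gt0 //.
  have -> : (x2 - x) * ((y - x) * ((f x2 - f x) / (x2 - x))) = (y - x) * (f x2 - f x).
    by field; rewrite subr_eq0 gt_eqF.
  have := concave_chord Dx Dx2 (_ : x <= y <= x2); rewrite xy yx2 => /(_ isT); lra.
rewrite -(ler_pM2l (_ : 0 < x - x1)) ?subr_gt0 //.
have -> : (x - x1) * ((y - x) * ((f x - f x1) / (x - x1))) = (y - x) * (f x - f x1).
  by field; rewrite subr_eq0 gt_eqF.
have := concave_chord Dx1 Dy (_ : x1 <= x <= y); rewrite xy ltW // => /(_ isT); lra.
Qed.

Lemma concave_increment_left x1 x x2 y : D x1 -> D x -> D y -> D x2 ->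
  x1 <= y <= x -> x1 < x -> x < x2 ->
  (y - x) * ((f x - f x1) / (x - x1)) <= f y - f x <= (y - x) * ((f x2 - f x) / (x2 - x)).
Proof.
move=> Dx1 Dx Dy Dx2 /andP[x1y yx] x1x xx2; apply/andP; split.
  rewrite -(ler_pM2l (_ : 0 < x - x1)) ?subr_gt0 //.
  have -> : (x - x1) * ((y - x) * ((f x - f x1) / (x - x1))) = (y - x) * (f x - f x1).
    by field; rewrite subr_eq0 gt_eqF.
  have := concave_chord Dx1 Dx (_ : x1 <= y <= x); rewrite x1y yx => /(_ isT); lra.
rewrite -(ler_pM2l (_ : 0 < x2 - x)) ?subr_gt0 //.
have -> : (x2 - x) * ((y - x) * ((f x2 - f x) / (x2 - x))) = (y - x) * (f x2 - f x).
  by field; rewrite subr_eq0 gt_eqF.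
have := concave_chord Dy Dx2 (_ : y <= x <= x2); rewrite yx ltW // => /(_ isT); lra.
Qed.

Lemma concave_lipschitz_at x1 x x2 : (forall y, x1 <= y <= x2 -> D y) ->
  x1 < x < x2 ->
  exists2 M, 0 < M & forall y, x1 <= y <= x2 -> `|f y - f x| <= M * `|y - x|.
Proof.
move=> Dseg /andP[x1x xx2].
have Dx1 : D x1 by apply: Dseg; lra.
have Dx2 : D x2 by apply: Dseg; lra.
have Dx : D x by apply: Dseg; lra.
set s1 := (f x - f x1) / (x - x1); set s2 := (f x2 - f x) / (x2 - x).
exists (`|s1| + `|s2| + 1) => [|y /andP[x1y yx2]]; first by rewrite ltr_wpDl.
have Dy : D y by apply: Dseg; lra.
apply: le_trans (_ : `|(y - x) * s1| + `|(y - x) * s2| <= _).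
  have n1 := ler_norm ((y - x) * s1); have n1' := ler_norm (- ((y - x) * s1)).
  have n2 := ler_norm ((y - x) * s2); have n2' := ler_norm (- ((y - x) * s2)).
  rewrite !normrN in n1' n2'; rewrite ler_norml; apply/andP.
  have [xy|yx] := leP x y.
  - have /andP[lo hi] :=
      concave_increment_right Dx1 Dx Dy Dx2 x1x (introT andP (conj xy yx2)) xx2.
    by rewrite -/s1 -/s2 in lo hi; split; lra.
  - have /andP[lo hi] :=
      concave_increment_left Dx1 Dx Dy Dx2 (introT andP (conj x1y (ltW yx))) x1x xx2.
    by rewrite -/s1 -/s2 in lo hi; split; lra.
by rewrite !normrM -mulrDr mulrC ler_wpM2r ?lerDl.
Qed.

Lemma concave_continuous_at x1 x x2 : (forall y, x1 <= y <= x2 -> D y) ->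
  x1 < x < x2 -> {for x, continuous f}.
Proof.
move=> Dseg xseg; have [M M0 lipM] := concave_lipschitz_at Dseg xseg.
apply/cvgrPdist_le => e e0; near=> y.
have : y \in `]x1, x2[ by near: y; apply: near_in_itvoo; rewrite in_itv.
rewrite in_itv /= => /andP[x1y yx2].
have yseg : x1 <= y <= x2 by rewrite !ltW.
rewrite distrC (le_trans (lipM y yseg)) //; apply/ltW; rewrite -ltr_pdivlMl // distrC.
by near: y; apply: (@cvgr_dist_lt _ R^o) => //; rewrite mulr_gt0 ?invr_gt0.
Unshelve. all: by end_near.
Qed.
End concave_real.

Lemma is_derive1_comp_affine (R : realType) (f : R -> R) (a b x : R) :
  derivable f (a * x + b) 1 ->
  is_derive x 1 (fun y => f (a * y + b)) (derive1 f (a * x + b) * a).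
Proof.
move=> df; have aff : is_derive x 1 (fun y : R => a * y + b) a.
  have -> : (fun y : R => a * y + b) = a *: id + cst b by apply/funext.
  by apply: is_derive_eq; rewrite scaler1 addr0.
by apply: is_derive1_comp; rewrite derive1E; apply: derivableP.
Qed.

Lemma IVT_unordered (R : realType) (f : R -> R) (a b v : R) :
  {within `[Num.min a b, Num.max a b], continuous f} ->
  Num.min (f a) (f b) <= v <= Num.max (f a) (f b) ->
  exists2 x, x \in `[Num.min a b, Num.max a b] & f x = v.
Proof.
have [ab|/ltW ab] := leP a b => fcont.
  exact: IVT.
by rewrite minC maxC; apply: IVT.
Qed.

Section positive_decreasing.
Variables (R : realType) (f : R -> R).
Hypothesis f_derivable : forall x, 0 < x -> derivable f x 1.
Hypothesis f'_lt0 : forall x, 0 < x -> derive1 f x < 0.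

Lemma pos_decr : {in `]0, +oo[ &, {homo f : x y /~ x < y}}.
Proof.
move=> x y; rewrite !in_itv /= !andbT => x0 y0 yx.
have sub0x z : z \in `]0, x + 1[ -> 0 < z by rewrite in_itv => /andP[].
apply: (@ltr0_derive1_lt_oo _ f 0 (x + 1)) => //.
- by move=> z /sub0x; apply: f_derivable.
- by move=> z /sub0x; apply: f'_lt0.
- move=> z; rewrite inE => /sub0x.
  by move/f_derivable/derivable1_diffP/differentiable_continuous.
- by rewrite in_itv /= x0; lra.
- by rewrite in_itv /= y0; lra.
Qed.

Lemma pos_decr_le x y : 0 < x -> 0 < y -> (f x <= f y) = (y <= x).
Proof. by move=> x0 y0; apply: (le_nmono_in pos_decr); rewrite in_itv /= andbT. Qed.

Lemma pos_inverseK x : 0 < x -> pos_inverse f (f x) = x.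
Proof.
move=> x0; have [|y0 fy] := @xgetPex _ 0 [set y | 0 < y /\ f y = f x]; first by exists x.
by apply/le_anti/andP; split; rewrite -pos_decr_le // fy.
Qed.

Lemma pos_inverse_between a b v : 0 < a -> 0 < b -> f b <= v <= f a ->
  0 < pos_inverse f v /\ f (pos_inverse f v) = v.
Proof.
move=> a0 b0 /andP[fbv vfa]; apply: (@xgetPex _ 0 [set y | 0 < y /\ f y = v]).
have ab : a <= b by rewrite -pos_decr_le // (le_trans fbv vfa).
have fcont : {within `[a, b], continuous f}.
  apply: derivable_within_continuous => z; rewrite in_itv /= => /andP[az _].
  exact/f_derivable/(lt_le_trans a0).
have [|x] := IVT ab fcont (v := v).
  by rewrite (min_idPr _) ?(max_idPl _) ?pos_decr_le ?fbv.
by rewrite in_itv /= => /andP[ax _] fx; exists x; split=> //; apply: lt_le_trans ax.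
Qed.
End positive_decreasing.

Section consumption_model.
Variables (R : realType) (n : nat) (p beta Ret Y : 'I_n -> R).
Variables (u : R -> \bar R) (c : R -> R).
Local Notation U := (ureal u).
Local Notation du := (derive1 (ureal u)).

Hypothesis u_fin : forall x, 0 < x -> u x \is a fin_num.
Hypothesis U_derivable : forall x, 0 < x -> derivable U x 1.
Hypothesis du_derivable : forall x, 0 < x -> derivable du x 1.
Hypothesis du_gt0 : forall x, 0 < x -> 0 < du x.
Hypothesis ddu_lt0 : forall x, 0 < x -> derive1 du x < 0.
Hypothesis du_cvg0 : du x @[x --> 0^'+] --> +oo.
Hypothesis p_gt0 : forall i, 0 < p i.
Hypothesis beta_gt0 : forall i, 0 < beta i.
Hypothesis Ret_gt0 : forall i, 0 < Ret i.
Hypothesis c_opt : is_consumption_function u p beta Ret Y c.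
Hypothesis c_concave : concave_on `]0, +oo[ c.

Definition interior_saving z := forall i, 0 < Ret i * z + Y i.

Definition marginal_value z :=
  \sum_(i < n) p i * (beta i * Ret i * du (Ret i * z + Y i)).

Definition value w x := U x + \sum_(i < n) p i * beta i * U (Ret i * (w - x) + Y i).

Let du_le := pos_decr_le du_derivable ddu_lt0.

Lemma resources_le i z z' : z <= z' -> Ret i * z + Y i <= Ret i * z' + Y i.
Proof. by move=> zz'; rewrite lerD2r; apply: ler_wpM2l => //; exact/ltW. Qed.

Lemma marginal_value_nonincr z z' : interior_saving z -> z <= z' ->
  marginal_value z' <= marginal_value z.
Proof.
move=> zint zz'; apply: ler_sum => i _.
apply: ler_wpM2l; first exact/ltW.
apply: ler_wpM2l; first by rewrite mulr_ge0 ?ltW.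
by rewrite du_le ?resources_le //; exact: lt_le_trans (zint i) (resources_le i zz').
Qed.

Lemma marginal_value_ge_state j z : interior_saving z ->
  p j * beta j * Ret j * du (Ret j * z + Y j) <= marginal_value z.
Proof.
move=> zint; rewrite /marginal_value (bigD1 j) //= !mulrA lerDl.
by apply: sumr_ge0 => i _; rewrite !mulr_ge0 ?ltW ?du_gt0.
Qed.

Lemma objectiveE w x : 0 < x -> interior_saving (w - x) ->
  objective u p beta Ret Y w x = (value w x)%:E.
Proof.
move=> x0 xint; rewrite /objective /value -(fineK (u_fin x0)).
under eq_bigr => i _ do rewrite -(fineK (u_fin (xint i))) -EFinM.
by rewrite sumEFin -EFinD.
Qed.

Lemma is_derive_value w x : 0 < x -> interior_saving (w - x) ->
  is_derive x 1 (value w) (du x - marginal_value (w - x)).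
Proof.
move=> x0 xint.
have affE i y : Ret i * (w - y) + Y i = - Ret i * y + (Ret i * w + Y i) by ring.
have -> : value w =
    U + \sum_(i < n) (fun y => p i * beta i * U (- Ret i * y + (Ret i * w + Y i))).
  by apply/funext => y; rewrite /value /= fct_sumE; under eq_bigr do rewrite affE.
rewrite /marginal_value -sumrN; apply: is_deriveD.
  by rewrite derive1E; apply/derivableP/U_derivable.
apply: is_derive_sum => i.
have -> : - (p i * (beta i * Ret i * du (Ret i * (w - x) + Y i))) =
    (p i * beta i) * (du (- Ret i * x + (Ret i * w + Y i)) * - Ret i).
  by rewrite -affE; ring.
apply: is_deriveZ; apply: is_derive1_comp_affine; rewrite -affE; exact: U_derivable.
Qed.

Lemma near_interior_saving w x : 0 < x -> interior_saving (w - x) ->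
  \forall y \near x, 0 < y /\ interior_saving (w - y).
Proof.
move=> x0 xint; near=> y; split.
  suff : y \in `]0, +oo[ by rewrite in_itv /= andbT.
  by near: y; apply: near_in_itvoy; rewrite in_itv /= x0.
near: y; apply: filter_forall => i.
apply: (@cvgr_gt _ _ _ _ (fun y => Ret i * (w - y) + Y i) _ _ 0 (xint i)).
by apply: cvgD (cvg_cst _); apply: cvgMr; apply: cvgB (cvg_cst _) cvg_id.
Unshelve. all: by end_near.
Qed.

Lemma euler_equation w : 0 < w -> interior_saving (w - c w) ->
  du (c w) = marginal_value (w - c w).
Proof.
move=> w0 wint; have [[c0 _] c_max] := c_opt w0.
have [e /= e0 ball_int] := (nbhs_ballP _ _).1 (near_interior_saving c0 wint).
have itv_int t : t \in `]c w - e, c w + e[ -> 0 < t /\ interior_saving (w - t).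
  by move=> tI; apply: ball_int; rewrite ball_itv.
have value_max t : t \in `]c w - e, c w + e[ -> value w t <= value w (c w).
  move=> /itv_int[t0 tint]; have [->//|tne] := eqVneq t (c w).
  rewrite -lee_fin -!objectiveE //; apply/ltW/c_max; last exact/eqP.
  by split=> // i; apply/ltW.
have [_ D0] : is_derive (c w) 1 (value w) 0.
  apply: (derive1_at_max (a := c w - e) (b := c w + e)) => //.
  - by rewrite lerD2l ge0_cp // ltW.
  - by move=> t /itv_int[t0 tint]; have [] := is_derive_value t0 tint.
  - by rewrite in_itv /= ltrDl ltrBlDr ltrDl e0.
have [_] := is_derive_value c0 wint; rewrite D0 => /eqP.
by rewrite eq_sym subr_eq0 => /eqP.
Qed.

Lemma consumption_continuous w : 0 < w -> {for w, continuous c}.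
Proof.
move=> w0; apply: (concave_continuous_at c_concave (x1 := w / 2) (x2 := 2 * w)).
  by move=> y y_seg; rewrite /= in_itv /= andbT; lra.
by apply/andP; split; lra.
Qed.

Lemma interior_saving_above_binding j z0 z :
  (forall i, 0 <= Ret i * z0 + Y i) -> Ret j * z0 + Y j = 0 ->
  0 < Ret j * z + Y j -> interior_saving z.
Proof.
move=> z0_feas z0_bind z_pos i.
have z0z : z0 < z by rewrite -(ltr_pM2l (Ret_gt0 j)); lra.
have := z0_feas i; have := Ret_gt0 i; nra.
Qed.

Lemma binding_saving_eq j k z z' :
  (forall i, 0 <= Ret i * z + Y i) -> (forall i, 0 <= Ret i * z' + Y i) ->
  Ret j * z + Y j = 0 -> Ret k * z' + Y k = 0 -> z = z'.
Proof.
move=> z_feas z'_feas z_bind z'_bind.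
have := z_feas k; have := z'_feas j; have := Ret_gt0 j; have := Ret_gt0 k; nra.
Qed.

Lemma saving_feasible w : 0 < w -> forall i, 0 <= Ret i * (w - c w) + Y i.
Proof. by case/c_opt => -[]. Qed.

Lemma interior_or_binding w : 0 < w ->
  interior_saving (w - c w) \/ exists j, Ret j * (w - c w) + Y j = 0.
Proof.
move=> w0; have [|] := pselect (exists j, Ret j * (w - c w) + Y j = 0); first by right.
move=> no_bind; left => i; rewrite lt_neqAle saving_feasible // andbT eq_sym.
by apply/eqP => bind_i; apply: no_bind; exists i.
Qed.

Lemma consumption_gt0 w : 0 < w -> 0 < c w.
Proof. by case/c_opt => -[]. Qed.

Lemma du_unbounded K : exists x, 0 < x /\ K < du x.
Proof.
have /cvgryPgt/(_ K) du_big := du_cvg0.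
have : \forall x \near 0^'+, 0 < x /\ K < du x.
  by near=> x; split; near: x; [exact: nbhs_right_gt | exact: du_big].
by move/filter_ex.
Unshelve. all: by end_near.
Qed.

Lemma resources_IVT j w0 w1 v : 0 < w0 -> 0 < w1 ->
  Ret j * (w0 - c w0) + Y j = 0 -> 0 <= v <= Ret j * (w1 - c w1) + Y j ->
  exists2 w, w \in `[Num.min w0 w1, Num.max w0 w1] & Ret j * (w - c w) + Y j = v.
Proof.
move=> w0_pos w1_pos w0_bind /andP[v_ge0 v_le]; apply: IVT_unordered.
  apply: continuous_in_subspaceT => z; rewrite inE /= in_itv /= => /andP[zlo _].
  apply: cvgD (cvg_cst _); apply: cvgMr; apply: cvgB cvg_id _.
  by apply/consumption_continuous/(lt_le_trans _ zlo); rewrite lt_min w0_pos.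
rewrite w0_bind (min_idPl (le_trans v_ge0 v_le)) (max_idPr (le_trans v_ge0 v_le)).
by rewrite v_ge0.
Qed.

Lemma interior_saving_everywhere w1 w0 : 0 < w1 -> interior_saving (w1 - c w1) ->
  0 < w0 -> interior_saving (w0 - c w0).
Proof.
move=> w1_pos w1_int w0_pos; have [//|[j w0_bind]] := interior_or_binding w0_pos.
pose m := Num.min (c w0) (c w1).
pose q := p j * beta j * Ret j.
have q_pos : 0 < q by rewrite !mulr_gt0.
have [x0 [x0_pos x0_big]] := du_unbounded (du m / q).
pose v := Num.min x0 (Ret j * (w1 - c w1) + Y j).
have v_pos : 0 < v by rewrite lt_min x0_pos w1_int.
have v_le : 0 <= v <= Ret j * (w1 - c w1) + Y j by rewrite ltW //= ge_min lexx orbT.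
have [w wI w_res] := resources_IVT w0_pos w1_pos w0_bind v_le.
have w_pos : 0 < w.
  by move: wI; rewrite in_itv /= => /andP[+ _]; apply: lt_le_trans; rewrite lt_min w0_pos.
have w_int : interior_saving (w - c w).
  apply: (interior_saving_above_binding (saving_feasible w0_pos) w0_bind).
  by rewrite w_res.
have m_le : m <= c w.
  by apply: (concave_ge_min c_concave) wI; rewrite /= in_itv /= andbT.
have euler_w := marginal_value_ge_state j w_int.
rewrite -euler_equation // -/q w_res in euler_w.
have du_cw : du (c w) <= du m.
  by rewrite du_le ?consumption_gt0 // lt_min !consumption_gt0.
have du_v : q * du x0 <= q * du v.
  by apply: ler_wpM2l; [exact: ltW | rewrite du_le // ge_min lexx].
have : q * (du m / q) < q * du x0 by rewrite ltr_pM2l.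
rewrite mulrC divfK ?gt_eqF //; lra.
Qed.

Lemma gfun_saving w : 0 < w -> interior_saving (w - c w) ->
  gfun u p beta Ret Y (w - c w) = c w.
Proof.
move=> w0 wint; rewrite /gfun -/(marginal_value _) -euler_equation //.
exact/(pos_inverseK du_derivable ddu_lt0)/consumption_gt0.
Qed.

Lemma gfun_ge w w' z : 0 < w -> 0 < w' ->
  interior_saving (w - c w) -> interior_saving (w' - c w') ->
  w - c w <= z <= w' - c w' -> c w <= gfun u p beta Ret Y z.
Proof.
move=> w0 w'0 wint w'int /andP[lo hi].
have V_le : marginal_value z <= du (c w).
  by rewrite euler_equation // marginal_value_nonincr.
have V_ge : du (c w') <= marginal_value z.
  rewrite euler_equation // marginal_value_nonincr // => i.
  exact: lt_le_trans (wint i) (resources_le i lo).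
have [g_pos dg] := pos_inverse_between du_derivable ddu_lt0 (consumption_gt0 w0)
  (consumption_gt0 w'0) (introT andP (conj V_ge V_le)).
by rewrite /gfun -/(marginal_value _) -du_le ?consumption_gt0 // dg.
Qed.

Lemma gfun_concave : concave_on [set w - c w | w in `]0, +oo[] (gfun u p beta Ret Y).
Proof.
move=> _ _ t [w1 + <-] [w2 + <-]; rewrite /= !in_itv /= !andbT => w1_pos w2_pos t01.
have [[w w_pos w_int]|no_int] :=
  pselect (exists2 w, 0 < w & interior_saving (w - c w)); last first.
  have binding w' : 0 < w' -> exists j, Ret j * (w' - c w') + Y j = 0.
    move=> w'_pos; have [w'_int|//] := interior_or_binding w'_pos.
    by case: no_int; exists w'.
  have [[j1 bind1] [j2 bind2]] := conj (binding w1 w1_pos) (binding w2 w2_pos).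
  have := binding_saving_eq (saving_feasible w1_pos) (saving_feasible w2_pos).
  move=> /(_ _ _ bind1 bind2) ->.
  by rewrite -!mulrDl subrKC !mul1r.
pose wt := t * w1 + (1 - t) * w2.
have [t0 t1] : 0 <= t /\ t <= 1 by apply/andP.
have wt_pos : 0 < wt by rewrite /wt; nra.
have int1 := interior_saving_everywhere w_pos w_int w1_pos.
have int2 := interior_saving_everywhere w_pos w_int w2_pos.
have intt := interior_saving_everywhere w_pos w_int wt_pos.
have c_wt : t * c w1 + (1 - t) * c w2 <= c wt.
  by apply: c_concave; rewrite //= in_itv /= andbT.
rewrite !gfun_saving //; apply: (le_trans c_wt).
have [s12|s21] := leP (w1 - c w1) (w2 - c w2).
- by apply: (gfun_ge wt_pos w2_pos) => //; apply/andP; split; rewrite /wt; nra.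
- by apply: (gfun_ge wt_pos w1_pos) => //; apply/andP; split; rewrite /wt; nra.
Qed.
End consumption_model.

Theorem lemma2 (R : realType) (n : nat) (p beta Ret Y : 'I_n -> R)
  (u : R -> \bar R) (c : R -> R) :
  (* u : [0,oo) -> R u {-oo}, finite on (0,oo) *)
  u 0 != +oo%E ->
  (forall x, 0 < x -> u x \is a fin_num) ->
  (* C^2 on (0,oo) *)
  (forall x, 0 < x -> derivable (ureal u) x 1 /\
                      derivable (derive1 (ureal u)) x 1) ->
  (forall x, 0 < x -> {for x, continuous (derive1 (derive1 (ureal u)))}) ->
  (forall x, 0 < x -> 0 < derive1 (ureal u) x) ->
  (forall x, 0 < x -> derive1 (derive1 (ureal u)) x < 0) ->
  (derive1 (ureal u) x @[x --> 0^'+] --> +oo) ->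
  (* (beta, R, Y): finite support, strictly positive components *)
  (forall i, 0 < p i) -> \sum_(i < n) p i = 1 ->
  (forall i, 0 < beta i) -> (forall i, 0 < Ret i) -> (forall i, 0 < Y i) ->
  (* c is the consumption function *)
  is_consumption_function u p beta Ret Y c ->
  concave_on `]0, +oo[ c ->
  concave_on [set w - c w | w in `]0, +oo[] (gfun u p beta Ret Y).
Proof.
move=> _ u_fin U_C2 _ du_gt0 ddu_lt0 du_cvg0 p_gt0 _ beta_gt0 Ret_gt0 _ c_opt c_concave.
have U_derivable x : 0 < x -> derivable (ureal u) x 1 by case/U_C2.
have du_derivable x : 0 < x -> derivable (derive1 (ureal u)) x 1 by case/U_C2.
exact: (gfun_concave u_fin U_derivable du_derivable du_gt0 ddu_lt0 du_cvg0
  p_gt0 beta_gt0 Ret_gt0 c_opt c_concave).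
Qed.
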